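(* Let $\Lambda$ be a finitely aligned left cancellative small category. (1) Suppose $s=\bigcup_{i=1}^n\alpha_i\beta_i^*\in S_\Lambda$ with $\alpha_i,\beta_i\in\Lambda$, and suppose $e$ is an idempotent of $S_\Lambda$ with $e\leqslant a^*a$ where $a=\alpha_j\beta_j^*$ for some $1\le j\le n$. Then $ses^*=aea^*$. (2) If $\xi\subseteq E(S_\Lambda)$ is a tight filter, $\alpha_1,\dots,\alpha_n\in S_\Lambda$, and $\bigcup_{i=1}^n\alpha_i\alpha_i^*\in\xi$, then $\alpha_j\alpha_j^*\in\xi$ for some $1\le j\le n$.
   Context: A small category $\Lambda$ (objects $\Lambda^0$, range $r$, source $s$, composition $\alpha\beta$ when $s(\alpha)=r(\beta)$) is left cancellative if $\alpha\beta=\alpha\gamma$ implies $\beta=\gamma$. Write $\alpha\Lambda=\{\alpha\beta:s(\alpha)=r(\beta)\}$. $\Lambda$ is finitely aligned if for all $\alpha,\beta$ there is a finite (possibly empty) $F\subseteq\Lambda$ with $\alpha\Lambda\cap\beta\Lambda=\bigcup_{f\in F}f\Lambda$. Each $\alpha\in\Lambda$ is regarded as the partial bijection $s(\alpha)\Lambda\to\alpha\Lambda$, $\beta\mapsto\alpha\beta$, in the symmetric inverse monoid $\mathcal{I}(\Lambda)$ (partial bijections of $\Lambda$ under composition on the largest possible domain, with zero the empty map); $\alpha^*$ is its inverse $\alpha\beta\mapsto\beta$. $S_\Lambda$ is the inverse subsemigroup of $\mathcal{I}(\Lambda)$ generated by $\{\alpha:\alpha\in\Lambda\}$, and $E(S_\Lambda)$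 its idempotents (identity maps on subsets); products like $\alpha\beta^*$ denote composition, and unions are unions of partial maps (graphs). The order on idempotents is $e\leqslant f$ iff $ef=e$. A filter is a nonempty proper subset of $E(S_\Lambda)$ closed under products and upward closed; a tight filter is a filter in the closure (in $\{0,1\}^{E(S_\Lambda)}$) of the set of maximal filters. *)

From Stdlib Require Import List Arith.
Import ListNotations.
Set Implicit Arguments.

(** A small category: a type of objects, a type of morphisms, range [rg],
    source [sc], identities, and a composition [cmp a b] (= ab) which is
    meaningful only when [sc a = rg b] (its value otherwise is irrelevant). *)
Record SmallCat := {
  Obj : Type;
  Mor : Type;
  rg : Mor -> Obj;
  sc : Mor -> Obj;
  idm : Obj -> Mor;
  cmp : Mor -> Mor -> Mor;
  rg_idm : forall o, rg (idm o) = o;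
  sc_idm : forall o, sc (idm o) = o;
  rg_cmp : forall a b, sc a = rg b -> rg (cmp a b) = rg a;
  sc_cmp : forall a b, sc a = rg b -> sc (cmp a b) = sc b;
  idm_l : forall a, cmp (idm (rg a)) a = a;
  idm_r : forall a, cmp a (idm (sc a)) = a;
  cmp_assoc : forall a b c, sc a = rg b -> sc b = rg c ->
      cmp (cmp a b) c = cmp a (cmp b c)
}.

Section Defs.
Variable C : SmallCat.

Definition inRight (a x : Mor C) : Prop :=
  exists y, sc C a = rg C y /\ x = cmp C a y.

Definition left_cancellative : Prop :=
  forall a b c, sc C a = rg C b -> sc C a = rg C c ->
    cmp C a b = cmp C a c -> b = c.

Definition finitely_aligned : Prop :=
  forall a b, exists F : list (Mor C),
    forall x, (inRight a x /\ inRight b x) <-> exists f, In f F /\ inRight f x.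

(** Partial maps of Λ, represented by their graphs: [f x y] means f(x) = y. *)
Definition pmap := Mor C -> Mor C -> Prop.

(** composition [pcomp f g] = f g (first g, then f), on the largest domain *)
Definition pcomp (f g : pmap) : pmap := fun x z => exists y, g x y /\ f y z.

Definition pinv (f : pmap) : pmap := fun x y => f y x.

Definition punion (n : nat) (f : nat -> pmap) : pmap :=
  fun x y => exists i, i < n /\ f i x y.

(** α as the partial bijection s(α)Λ -> αΛ, β ↦ αβ *)
Definition mor_map (a : Mor C) : pmap :=
  fun x y => sc C a = rg C x /\ y = cmp C a x.

Inductive inS : pmap -> Prop :=
| inS_gen a : inS (mor_map a)
| inS_comp f g : inS f -> inS g -> inS (pcomp f g)
| inS_inv f : inS f -> inS (pinv f).

Definition isE (e : pmap) : Prop := inS e /\ pcomp e e = e.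

Definition leqE (e f : pmap) : Prop := pcomp e f = e.

Definition is_filter (xi : pmap -> Prop) : Prop :=
  (forall e, xi e -> isE e) /\
  (exists e, xi e) /\
  (exists e, isE e /\ ~ xi e) /\
  (forall e f, xi e -> xi f -> xi (pcomp e f)) /\
  (forall e f, xi e -> isE f -> leqE e f -> xi f).

Definition is_max_filter (xi : pmap -> Prop) : Prop :=
  is_filter xi /\
  forall eta, is_filter eta -> (forall e, xi e -> eta e) -> forall e, eta e -> xi e.

(** tight filter: a filter lying in the closure, in the product topology of
    {0,1}^{E(S_Λ)}, of the set of maximal filters; i.e. every basic open
    neighbourhood {η | X ⊆ η, Y ∩ η = ∅} (X, Y finite subsets of E(S_Λ))
    of ξ contains a maximal filter. *)
Definition is_tight_filter (xi : pmap -> Prop) : Prop :=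
  is_filter xi /\
  forall X Y : list pmap,
    (forall e, In e X -> xi e) ->
    (forall e, In e Y -> isE e /\ ~ xi e) ->
    exists eta, is_max_filter eta /\
      (forall e, In e X -> eta e) /\ (forall e, In e Y -> ~ eta e).

End Defs.

Arguments inRight {C}. Arguments pcomp {C}. Arguments pinv {C}.
Arguments punion {C}. Arguments mor_map {C}. Arguments inS {C}.
Arguments isE {C}. Arguments leqE {C}. Arguments is_filter {C}.
Arguments is_max_filter {C}. Arguments is_tight_filter {C}.

(* (1) Elements of S_Λ are partial bijections, so s is a partial function;
   since a ⊆ s and e ≤ a*a forces the domain of e into the domain of a,
   s and a agree wherever e is defined, whence s e s* = a e a*.
   (2) Idempotents are identities on subsets, so their order is inclusion.
   If a maximal filter η avoids an idempotent f, maximality forces the filter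
   generated by η and f to be all of E(S_Λ): every idempotent g lies above f h
   for some h ∈ η.  Doing this for every f_j = α_j α_j* and one idempotent
   k ∉ η, the product of u = ∪ f_j with the chosen h_j lies in η and below k,
   a contradiction.  Tightness transfers the statement from maximal filters
   to ξ through the neighbourhood {η | u ∈ η, f_j ∉ η for all j}. *)
From Stdlib Require Import List Arith.
From Stdlib Require Import Classical FunctionalExtensionality PropExtensionality Lia.
Import ListNotations.
Set Implicit Arguments.

Section PartialMaps.
Variable C : SmallCat.

Definition pfunctional (f : pmap C) : Prop := forall x y y', f x y -> f x y' -> y = y'.
Definition pinjective (f : pmap C) : Prop := forall x x' y, f x y -> f x' y -> x = x'.
Definition pdiagonal (f : pmap C) : Prop := forall x y, f x y -> x = y.

Lemma pmap_ext (f g : pmap C) : (forall x y, f x y <-> g x y) -> f = g.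
Proof.
  intro H. apply functional_extensionality; intro x.
  apply functional_extensionality; intro y.
  apply propositional_extensionality, H.
Qed.

Lemma pcomp_diag_idem (d : pmap C) : pdiagonal d -> pcomp d d = d.
Proof.
  intro D. apply pmap_ext; intros x y; split.
  - intros [z [h1 h2]]. rewrite (D _ _ h1). exact h2.
  - intro h. destruct (D _ _ h). exists x. auto.
Qed.

Lemma pcomp_diag (e f : pmap C) : pdiagonal e -> pdiagonal f -> pdiagonal (pcomp e f).
Proof.
  intros De Df x y [z [h1 h2]]. rewrite (Df _ _ h1). exact (De _ _ h2).
Qed.

Lemma pcomp_diagE (e f : pmap C) x : pdiagonal f ->
  pcomp e f x x <-> e x x /\ f x x.
Proof.
  intro Df; split.
  - intros [z [h1 h2]]. destruct (Df _ _ h1). auto.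
  - intros [h1 h2]. exists x. auto.
Qed.

Lemma leqE_diagE (e g : pmap C) : pdiagonal e -> pdiagonal g ->
  leqE e g <-> forall x, e x x -> g x x.
Proof.
  intros De Dg; split.
  - intros L x h. rewrite <- L in h. destruct h as [y [h1 h2]].
    rewrite (De _ _ h2) in h1. exact h1.
  - intro H. apply pmap_ext; intros x z; split.
    + intros [y [h1 h2]]. rewrite <- (Dg _ _ h1) in h2. exact h2.
    + intro h. destruct (De _ _ h). exists x. auto.
Qed.

Lemma conj_sub_functional (s a e : pmap C) :
  pfunctional s -> (forall x y, a x y -> s x y) ->
  pdiagonal e -> leqE e (pcomp (pinv a) a) ->
  pcomp (pcomp s e) (pinv s) = pcomp (pcomp a e) (pinv a).
Proof.
  intros Fs Sub De Le.
  assert (Agree : forall z t, e z z -> s z t -> a z t).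
  { intros z t hz hs. rewrite <- Le in hz.
    destruct hz as [y [[u [hu _]] _]].
    rewrite (Fs _ _ _ hs (Sub _ _ hu)). exact hu. }
  apply pmap_ext; intros x y; split;
    intros [z [h1 [w [h2 h3]]]]; destruct (De _ _ h2);
    exists z; (split; [|exists z; split]); unfold pinv in *; auto.
Qed.

End PartialMaps.

Section Idempotents.
Variable C : SmallCat.
Hypothesis LC : left_cancellative C.

Lemma inS_partial_bijection (f : pmap C) : inS f -> pfunctional f /\ pinjective f.
Proof.
  induction 1 as [a|f g _ [Ff If] _ [Fg Ig]|f _ [Ff If]].
  - split.
    + intros x y y' [_ ->] [_ ->]. reflexivity.
    + intros x x' y [h1 ->] [h2 e2]. exact (LC _ _ _ h1 h2 e2).
  - split.
    + intros x y y' [z [h1 h2]] [z' [h3 h4]].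
      rewrite (Fg _ _ _ h1 h3) in h2. exact (Ff _ _ _ h2 h4).
    + intros x x' y [z [h1 h2]] [z' [h3 h4]].
      rewrite (If _ _ _ h2 h4) in h1. exact (Ig _ _ _ h1 h3).
  - split; [exact (fun x y y' h1 h2 => If _ _ _ h1 h2)
           |exact (fun x x' y h1 h2 => Ff _ _ _ h1 h2)].
Qed.

Lemma isE_diagonal (e : pmap C) : isE e -> pdiagonal e.
Proof.
  intros [He Hid] x y Hxy.
  destruct (inS_partial_bijection He) as [Fe Ie].
  assert (Hc : pcomp e e x y) by (rewrite Hid; exact Hxy).
  destruct Hc as [z [h1 h2]].
  rewrite (Fe _ _ _ h1 Hxy) in h2. exact (Ie _ _ _ Hxy h2).
Qed.

Lemma isE_pcomp (e f : pmap C) : isE e -> isE f -> isE (pcomp e f).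
Proof.
  intros He Hf. split.
  - apply inS_comp; [apply He|apply Hf].
  - apply pcomp_diag_idem, pcomp_diag; apply isE_diagonal; auto.
Qed.

Lemma isE_pcomp_pinv (a : pmap C) : inS a -> isE (pcomp a (pinv a)).
Proof.
  intro Ha. destruct (inS_partial_bijection Ha) as [Fa _].
  split.
  - apply inS_comp; [|apply inS_inv]; exact Ha.
  - apply pcomp_diag_idem. intros x y [z [h1 h2]]. exact (Fa _ _ _ h1 h2).
Qed.

Lemma max_filter_avoid (eta : pmap C -> Prop) (f : pmap C) :
  is_max_filter eta -> isE f -> ~ eta f ->
  forall g, isE g -> exists h, eta h /\ forall x, f x x -> h x x -> g x x.
Proof.
  intros [[EE [[h0 Hh0] [_ [Prod _]]]] Max] Hf Hnf g Hg.
  apply NNPP; intro Hng.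
  set (G := fun g => isE g /\ exists h, eta h /\ forall x, f x x -> h x x -> g x x).
  assert (FG : is_filter G).
  { split; [|split; [|split; [|split]]].
    - intros e [He _]. exact He.
    - exists f. split; [exact Hf|]. exists h0. auto.
    - exists g. split; [exact Hg|]. intros [_ Hx]. exact (Hng Hx).
    - intros e1 e2 [He1 [h1 [Hh1 K1]]] [He2 [h2 [Hh2 K2]]].
      split; [apply isE_pcomp; auto|].
      exists (pcomp h1 h2). split; [apply Prod; auto|].
      intros x hf hh.
      apply pcomp_diagE in hh; [|apply isE_diagonal, EE, Hh2].
      apply pcomp_diagE; [apply isE_diagonal, He2|].
      destruct hh; auto.
    - intros e1 e2 [He1 [h1 [Hh1 K1]]] He2 L. split; [exact He2|].
      exists h1. split; [exact Hh1|]. intros x a b.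
      rewrite (leqE_diagE (isE_diagonal He1) (isE_diagonal He2)) in L. auto. }
  apply Hnf, (Max G FG).
  - intros e He. split; [apply EE, He|]. exists e. auto.
  - split; [exact Hf|]. exists h0. auto.
Qed.

Lemma max_filter_avoid_all (eta : pmap C -> Prop) (n : nat) (f : nat -> pmap C) :
  is_max_filter eta -> (forall j, j < n -> isE (f j) /\ ~ eta (f j)) ->
  forall g, isE g ->
  exists h, eta h /\ forall j x, j < n -> f j x x -> h x x -> g x x.
Proof.
  intros Meta Hf g Hg. pose proof Meta as [[EE [[h0 Hh0] [_ [Prod _]]]] _].
  induction n as [|n IH].
  - exists h0. split; [exact Hh0|]. intros; lia.
  - destruct IH as [h [Hh K]]; [intros j hj; apply Hf; lia|].
    destruct (Hf n (Nat.lt_succ_diag_r n)) as [Hfn Hnfn].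
    destruct (max_filter_avoid Meta Hfn Hnfn Hg) as [hn [Hhn Kn]].
    exists (pcomp h hn). split; [apply Prod; auto|].
    intros j x hj hf hh.
    apply pcomp_diagE in hh as [hh1 hh2]; [|apply isE_diagonal, EE, Hhn].
    destruct (Nat.eq_dec j n) as [->|ne]; [auto|].
    apply (K j); auto; lia.
Qed.

Lemma max_filter_punion (eta : pmap C -> Prop) (n : nat) (f : nat -> pmap C) :
  is_max_filter eta -> (forall j, j < n -> isE (f j)) -> eta (punion n f) ->
  exists j, j < n /\ eta (f j).
Proof.
  intros Meta Hf Hu. apply NNPP; intro Hno.
  pose proof Meta as [[EE [_ [[k [Hk Hnk]] [Prod Up]]]] _].
  assert (Avoid : forall j, j < n -> isE (f j) /\ ~ eta (f j)).
  { intros j hj. split; [auto|]. intro Hj. apply Hno. eauto. }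
  destruct (max_filter_avoid_all f Meta Avoid Hk) as [h [Hh K]].
  apply Hnk, (Up (pcomp (punion n f) h)); [apply Prod; auto|exact Hk|].
  assert (Dh : pdiagonal h) by apply isE_diagonal, EE, Hh.
  apply leqE_diagE; [apply pcomp_diag; auto; apply isE_diagonal, EE, Hu
                    |apply isE_diagonal, Hk|].
  intros x hx. apply (pcomp_diagE _ _ Dh) in hx as [[i [hi hfi]] hhx].
  exact (K i x hi hfi hhx).
Qed.

Lemma tight_filter_punion (xi : pmap C -> Prop) (n : nat) (f : nat -> pmap C) :
  is_tight_filter xi -> (forall j, j < n -> isE (f j)) -> xi (punion n f) ->
  exists j, j < n /\ xi (f j).
Proof.
  intros [_ Tight] Hf Hu. apply NNPP; intro Hno.
  destruct (Tight [punion n f] (map f (seq 0 n))) as [eta [Meta [HX HY]]].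
  - intros e [<-|[]]. exact Hu.
  - intros e He. apply in_map_iff in He as [j [<- Hj]].
    apply in_seq in Hj. split; [apply Hf; lia|].
    intro Hxj. apply Hno. exists j. split; [lia|exact Hxj].
  - destruct (max_filter_punion f Meta Hf (HX _ (or_introl eq_refl))) as [j [hj Hj]].
    apply (HY (f j)); [apply in_map_iff; exists j; split; [|apply in_seq; lia]|]; auto.
Qed.

End Idempotents.

Theorem lemma4p2 (C : SmallCat) :
  left_cancellative C -> finitely_aligned C ->
  (forall (n : nat) (alpha beta : nat -> Mor C) (j : nat) (e : pmap C),
     let s := punion n (fun i => pcomp (mor_map (alpha i)) (pinv (mor_map (beta i)))) in
     let a := pcomp (mor_map (alpha j)) (pinv (mor_map (beta j))) in
     inS s -> j < n -> isE e -> leqE e (pcomp (pinv a) a) ->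
     pcomp (pcomp s e) (pinv s) = pcomp (pcomp a e) (pinv a))
  /\
  (forall (xi : pmap C -> Prop) (n : nat) (alpha : nat -> pmap C),
     is_tight_filter xi ->
     (forall i, i < n -> inS (alpha i)) ->
     xi (punion n (fun i => pcomp (alpha i) (pinv (alpha i)))) ->
     exists j, j < n /\ xi (pcomp (alpha j) (pinv (alpha j)))).
Proof.
  intros LC _. split.
  - intros n alpha beta j e s a Hs Hj He.
    apply conj_sub_functional.
    + exact (proj1 (inS_partial_bijection LC Hs)).
    + intros x y h. exists j. auto.
    + exact (isE_diagonal LC He).
  - intros xi n alpha Hxi Hal.
    apply (tight_filter_punion LC _ Hxi).
    intros j hj. apply isE_pcomp_pinv; auto.
Qed.
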